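(* Let $A$, $\Omega$ be finite nonempty sets. The set of environments $(u_S,u_R)\in[0,1]^{2|A||\Omega|}$ satisfying scant-indifferences has Lebesgue measure one.
   Context: $A=\{a_1,\dots,a_{|A|}\}$. An environment is a pair of functions $u_S,u_R:A\times\Omega\to[0,1]$, identified with a point of $[0,1]^{2|A||\Omega|}$. For $a\in A$ let $\mathbf u_S(a)=u_S(a,\cdot)\in\mathbb R^{|\Omega|}$ and $\mathbf u_R(a)=u_R(a,\cdot)\in\mathbb R^{|\Omega|}$. For each $i$, the expanded-indifference matrix $T^i$ has $|\Omega|$ columns and rows: $\mathbf u_S(a_j)-\mathbf u_S(a_i)$ for each $j\ne i$, then $\mathbf u_R(a_j)-\mathbf u_R(a_i)$ for each $j\ne i$, then the rows of the $|\Omega|\times|\Omega|$ identity matrix. A row-submatrix of $T^i$ is a matrix obtained by deleting some rows of $T^i$. The environment satisfies scant-indifferences if for each $i$, every row-submatrix of $T^i$ has full rank. *)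

From HB Require Import structures.
From mathcomp Require Import all_boot all_order all_algebra.
From mathcomp Require Import classical_sets reals ereal sequences.
Set Implicit Arguments. Unset Strict Implicit. Unset Printing Implicit Defensive.
Import Order.TTheory GRing.Theory Num.Theory.
Local Open Scope ring_scope.
Local Open Scope classical_set_scope.

Definition box (R : realType) (I : finType) (a b : I -> R) : set (I -> R) :=
  [set x | forall c, a c <= x c <= b c].
Definition box_vol (R : realType) (I : finType) (a b : I -> R) : R :=
  \prod_(c : I) Num.max 0 (b c - a c).
Definition lebesgue_null (R : realType) (I : finType) (E : set (I -> R)) : Prop :=
  forall eps : R, 0 < eps ->
    exists a b : nat -> I -> R,
      E `<=` \bigcup_k box (a k) (b k) /\
      (\sum_(0 <= k <oo) (box_vol (a k) (b k))%:E < eps%:E)%E.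

(* An environment (u_S, u_R) is a point of R^{(A x Omega) + (A x Omega)}:
   coordinate inl (a,w) is u_S(a,w), coordinate inr (a,w) is u_R(a,w). *)
Definition envT (A O : finType) := ((A * O) + (A * O))%type.
Definition uS (R : realType) (A O : finType) (x : envT A O -> R) a w := x (inl (a, w)).
Definition uR (R : realType) (A O : finType) (x : envT A O -> R) a w := x (inr (a, w)).

Definition env_cube (R : realType) (A O : finType) : set (envT A O -> R) :=
  [set x | forall c, 0 <= x c <= 1].

(* Row index type of the expanded-indifference matrix T^i:
   sender rows j <> i, receiver rows j <> i, identity rows indexed by Omega. *)
Definition rowT (A O : finType) (i : A) :=
  ({j : A | j != i} + {j : A | j != i} + O)%type.

Definition Tmat (R : realType) (A O : finType) (x : envT A O -> R) (i : A)
    (r : rowT O i) (w : O) : R :=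
  match r with
  | inl (inl j) => uS x (val j) w - uS x i w
  | inl (inr j) => uR x (val j) w - uR x i w
  | inr w' => (w' == w)%:R
  end.

Definition Tsub (R : realType) (A O : finType) (x : envT A O -> R) (i : A)
    (S : {set rowT O i}) : 'M[R]_(#|S|, #|O|) :=
  \matrix_(k < #|S|, l < #|O|) Tmat x (enum_val k) (enum_val l).

Definition scant_indifferences (R : realType) (A O : finType) (x : envT A O -> R) : Prop :=
  forall (i : A) (S : {set rowT O i}), \rank (Tsub x S) = minn #|S| #|O|.

(* Scant indifferences hold unless some minor of some T^i vanishes: for a set S of rows of T^i
   with difference rows D and identity rows W, take min(|D|, |Omega \ W|) rows of D against as
   many columns outside W, together with W against its own columns.  This minor is
   det [x(p a b) - x(q a b)]_(a,b) with the coordinates p a b pairwise distinct and different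
   from every q a' b'.  Such a determinant is affine in the coordinate p 0 0, with slope a
   determinant of the same form and smaller size.  By induction, its near-zero sets in the unit
   cube have arbitrarily small content: where the slope is small this is the induction
   hypothesis, and elsewhere the set is a thin slab around a Lipschitz graph over the other
   coordinates.  A finite union of sets of Jordan content zero is Lebesgue-null. *)

From HB Require Import structures.
From mathcomp Require Import all_boot all_order all_algebra.
From mathcomp Require Import classical_sets reals ereal sequences.
From mathcomp Require Import boolp fingroup perm.
From mathcomp Require Import ring lra.
Import Order.TTheory GRing.Theory Num.Theory.
Local Open Scope classical_set_scope.
Local Open Scope ring_scope.
Set Implicit Arguments. Unset Strict Implicit. Unset Printing Implicit Defensive.

Local Notation set_coord x c v := (@dfwith _ (fun=> _) x c v).

Lemma det_add_scale_delta (R : comPzRingType) n (M : 'M[R]_n) i j a :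
  \det (M + a *: delta_mx i j) = \det M + a * cofactor M i j.
Proof.
have cofE k : cofactor (M + a *: delta_mx i j) i k = cofactor M i k.
  rewrite /cofactor; congr (_ * \det _); apply/matrixP => k1 k2.
  by rewrite !mxE eq_sym (negbTE (neq_lift _ _)) mulr0 addr0.
rewrite !(expand_det_row _ i).
under eq_bigr => k _ do rewrite cofE !mxE eqxx mulrDl.
rewrite big_split /=; congr (_ + _).
rewrite (bigD1 j) //= eqxx mulr1 big1 ?addr0 // => k /negbTE->.
by rewrite mulr0 mul0r.
Qed.

Lemma mxrank_mxsub (F : fieldType) m n m' n' (f : 'I_m' -> 'I_m) (g : 'I_n' -> 'I_n)
    (M : 'M[F]_(m, n)) :
  (\rank (mxsub f g M) <= \rank M)%N.
Proof.
rewrite mxsubrc rowsubE; apply: leq_trans (mxrankM_maxr _ _) _.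
by rewrite -[M]mulmx1 -mulmx_colsub mulmx1 mxrankM_maxl.
Qed.

(** * Sets of Jordan content zero *)

Section UnitCube.
Variables (R : realType) (I : finType).
Implicit Types (E F : set (I -> R)) (x y : I -> R).

Definition unit_cube : set (I -> R) := [set x | forall c, 0 <= x c <= 1].

Definition box_coverable E (e : R) : Prop :=
  exists (J : finType) (a b : J -> I -> R),
    (forall x, E x -> exists j, box (a j) (b j) x) /\
    \sum_j box_vol (a j) (b j) <= e.

Definition jordan_null E : Prop := forall eps, 0 < eps -> box_coverable E eps.

Lemma box_vol_ge0 (a b : I -> R) : 0 <= box_vol a b.
Proof. by apply: prodr_ge0 => c _; rewrite le_max lexx. Qed.

Lemma box_coverableS E F e : E `<=` F -> box_coverable F e -> box_coverable E e.
Proof.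
move=> EF [J [a [b [cov le]]]]; exists J, a, b; split => // x Ex.
exact: cov (EF _ Ex).
Qed.

Lemma box_coverable_le E e e' : e <= e' -> box_coverable E e -> box_coverable E e'.
Proof.
move=> ee' [J [a [b [cov le]]]]; exists J, a, b; split => //.
exact: le_trans ee'.
Qed.

Lemma box_coverableU E F e1 e2 :
  box_coverable E e1 -> box_coverable F e2 -> box_coverable (E `|` F) (e1 + e2).
Proof.
move=> [J1 [a1 [b1 [c1 l1]]]] [J2 [a2 [b2 [c2 l2]]]].
exists (J1 + J2)%type, (fun j => match j with inl j => a1 j | inr j => a2 j end).
exists (fun j => match j with inl j => b1 j | inr j => b2 j end); split.
  move=> x [/c1 [j hj]|/c2 [j hj]]; [by exists (inl j)|by exists (inr j)].
by rewrite big_sumType /=; apply: lerD.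
Qed.

Lemma box_coverable0 e : 0 <= e -> box_coverable set0 e.
Proof.
move=> e0; exists void, (fun _ _ => 0), (fun _ _ => 0); split => //.
by rewrite big_pred0 // => -[].
Qed.

Lemma jordan_nullS E F : E `<=` F -> jordan_null F -> jordan_null E.
Proof. by move=> EF nF eps /nF; apply: box_coverableS. Qed.

Lemma jordan_nullU E F : jordan_null E -> jordan_null F -> jordan_null (E `|` F).
Proof.
move=> nE nF eps e0; have e2 : 0 < eps / 2 by rewrite divr_gt0.
apply: (box_coverable_le (e := eps / 2 + eps / 2)); first lra.
exact: box_coverableU (nE _ e2) (nF _ e2).
Qed.

Lemma jordan_null_bigcup (T : finType) (E : T -> set (I -> R)) :
  (forall t, jordan_null (E t)) -> jordan_null (\bigcup_t E t).
Proof.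
move=> nE; apply: (jordan_nullS (F := [set x | exists2 t, t \in enum T & E t x])).
  by move=> x [t _ Etx]; exists t; rewrite ?mem_enum.
elim: (enum T) => [|t s IH].
  by move=> eps /ltW/box_coverable0; apply: box_coverableS => x [].
apply: (jordan_nullS _ (jordan_nullU (nE t) IH)).
by move=> x [t']; rewrite inE => /orP[/eqP ->|ts] Ex; [left|right; exists t'].
Qed.

Lemma jordan_null_lebesgue_null (i0 : I) E : jordan_null E -> lebesgue_null E.
Proof.
move=> nE eps e0; have [J [a [b [cov le]]]] := nE _ (divr_gt0 e0 (ltr0Sn _ 1)).
(* Pad the finite cover with boxes [0, -1]^I, of volume 0 because [I] is nonempty. *)
pose s := [seq Some j | j <- enum J].
pose a' k := if nth None s k is Some j then a j else fun=> 0.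
pose b' k := if nth None s k is Some j then b j else fun=> -1.
exists a', b'; split.
  move=> x /cov [j hj]; exists (index j (enum J)) => //.
  have hs : (index j (enum J) < size (enum J))%N by rewrite index_mem mem_enum.
  by rewrite /a' /b' /s (nth_map j) // nth_index ?mem_enum.
pose G o := if o is Some j then box_vol (a j) (b j) else 0.
have vol_pad k : box_vol (a' k) (b' k) = G (nth None s k).
  rewrite /a' /b' /G; case: (nth None s k) => // .
  rewrite /box_vol (bigD1 i0) //= subr0.
  have -> : Num.max 0 (-1 : R) = 0 by apply/max_idPl; rewrite lerN10.
  by rewrite mul0r.
rewrite (nneseries_split 0 (size s)); last by move=> k _; rewrite lee_fin box_vol_ge0.
rewrite add0n eseries0 ?adde0; last by move=> k hk _; rewrite vol_pad nth_default.
rewrite sumEFin lte_fin.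
have -> : \sum_(0 <= k < size s) box_vol (a' k) (b' k) = \sum_j box_vol (a j) (b j).
  rewrite (eq_bigr (fun k => G (nth None s k))); last by move=> k _; rewrite vol_pad.
  by rewrite -(big_nth None (r := s) xpredT G) big_map big_enum.
apply: le_lt_trans le _; lra.
Qed.

Definition l1_dist x y : R := \sum_c `|x c - y c|.

Definition grid_index (N : nat) (t : R) : nat := minn (Num.truncn (t * N%:R)) N.-1.

Lemma grid_index_lt N t : (0 < N)%N -> (grid_index N t < N)%N.
Proof. by move=> N0; apply: leq_ltn_trans (geq_minr _ _) _; rewrite prednK. Qed.

Lemma grid_index_bounds N t : (0 < N)%N -> 0 <= t <= 1 ->
  (grid_index N t)%:R / N%:R <= t <= (grid_index N t).+1%:R / N%:R.
Proof.
move=> N0 /andP[t0 t1]; have Np : 0 < N%:R :> R by rewrite ltr0n.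
have /andP[lo hi] := truncn_itv (mulr_ge0 t0 (ltW Np)).
rewrite ler_pdivrMr // ler_pdivlMr // /grid_index; apply/andP; split.
  by apply: le_trans lo; rewrite ler_nat geq_minl.
case: leqP => [_|_]; first exact: ltW.
by rewrite prednK // -{2}(mul1r N%:R) ler_pM.
Qed.

Section GridCells.
Variables (E : set (I -> R)) (c : I) (N : nat) (r : R).

Definition grid_cell := {ffun {c' : I | c' != c} -> 'I_N}.

Definition in_cell (P : grid_cell) x : Prop :=
  forall k, (P k)%:R / N%:R <= x (val k) <= (P k).+1%:R / N%:R.

Definition cell_height (P : grid_cell) : R :=
  if pselect (exists y, E y /\ in_cell P y) is left H then sval (cid H) c else 0.

Definition cell_box_lo (P : grid_cell) (c' : I) : R :=
  if insub c' is Some k then (P k)%:R / N%:R else cell_height P - r.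

Definition cell_box_hi (P : grid_cell) (c' : I) : R :=
  if insub c' is Some k then (P k).+1%:R / N%:R else cell_height P + r.

Lemma exists_cell x : (0 < N)%N -> unit_cube x -> exists P, in_cell P x.
Proof.
move=> N0 cx; exists [ffun k => Ordinal (grid_index_lt (x (val k)) N0)] => k.
by rewrite ffunE; apply: grid_index_bounds.
Qed.

Lemma l1_dist_in_cell P x y : in_cell P x -> in_cell P y ->
  l1_dist x (set_coord y c (x c)) <= #|I|%:R * N%:R^-1.
Proof.
move=> Px Py; rewrite mulr_natl -sumr_const; apply: ler_sum => c' _.
case: (dfwithP y (x c) c') => [|c'' nc]; first by rewrite subrr normr0 invr_ge0.
rewrite eq_sym in nc.
have /andP[x1 x2] := Px (Sub c'' nc); have /andP[y1 y2] := Py (Sub c'' nc).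
move: x2 y2; rewrite -[_.+1]addn1 natrD mulrDl mul1r /= => x2 y2.
rewrite ler_norml; apply/andP; split; lra.
Qed.

Lemma box_vol_cell P : 0 <= r ->
  box_vol (cell_box_lo P) (cell_box_hi P) = 2 * r * (N%:R^-1) ^+ #|I|.-1.
Proof.
move=> r0; rewrite /box_vol (bigD1 c) //= /cell_box_lo /cell_box_hi insubF ?eqxx //.
have -> : cell_height P + r - (cell_height P - r) = 2 * r by ring.
rewrite (max_idPr _); last lra.
congr (_ * _); rewrite -(cardC1 c) -prodr_const; apply: eq_bigr => c' nc.
rewrite insubT /= -mulrBl -natrB // subSnn mul1r.
by apply/max_idPr; rewrite invr_ge0.
Qed.

Lemma cell_box_mem P x : E x -> in_cell P x ->
  (forall y, E y -> in_cell P y -> `|x c - y c| <= r) ->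
  box (cell_box_lo P) (cell_box_hi P) x.
Proof.
move=> Ex Px near c'; rewrite /cell_box_lo /cell_box_hi.
case: insubP => [k _ <-|]; first exact: Px.
rewrite negbK => /eqP ->; rewrite /cell_height; case: pselect => [H|[]]; last by exists x.
by case: (cid H) => y [Ey Py] /=; rewrite -ler_distl; apply: near.
Qed.

End GridCells.

Lemma box_coverable_lipschitz_slab E c (L w : R) :
  0 <= L -> 0 <= w -> E `<=` unit_cube ->
  (forall x y, E x -> E y -> `|x c - y c| <= L * l1_dist x (set_coord y c (x c)) + w) ->
  forall e, 0 < e -> box_coverable E (2 * w + e).
Proof.
move=> L0 w0 Ecube slab e e0.
pose N := (Num.truncn (2 * L * #|I|%:R / e)).+1.
have Np : 0 < N%:R :> R by rewrite ltr0n.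
have hN : 2 * L * #|I|%:R / N%:R <= e.
  rewrite ler_pdivrMr // -ler_pdivrMl // mulrC.
  exact/ltW/truncnS_gt.
pose r := L * #|I|%:R / N%:R + w.
have r0 : 0 <= r by rewrite addr_ge0 // !mulr_ge0 ?invr_ge0 // ltW.
exists (grid_cell c N), (cell_box_lo E r), (cell_box_hi E r); split.
  move=> x Ex; have [P Px] := @exists_cell c N x (ltn0Sn _) (Ecube _ Ex); exists P.
  apply: cell_box_mem => // y Ey Py; apply: le_trans (slab _ _ Ex Ey) _.
  rewrite lerD2r -mulrA ler_wpM2l //; exact: l1_dist_in_cell.
rewrite (eq_bigr _ (fun P _ => box_vol_cell E P r0)) sumr_const card_ffun card_ord.
rewrite card_sig cardC1 -[_ *+ _]mulr_natr natrX -mulrA -exprMn mulVf ?gt_eqF //.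
by rewrite expr1n mulr1 /r; move: hN; lra.
Qed.

(** * Bounded Lipschitz functions with thin zero sets *)

Definition bounded_lipschitz (f : (I -> R) -> R) : Prop :=
  (exists M, 0 <= M /\ forall x, unit_cube x -> `|f x| <= M) /\
  (exists L, 0 <= L /\
     forall x y, unit_cube x -> unit_cube y -> `|f x - f y| <= L * l1_dist x y).

Lemma eq_bounded_lipschitz f g : f =1 g -> bounded_lipschitz f -> bounded_lipschitz g.
Proof. by move=> /funext <-. Qed.

Lemma bounded_lipschitz_cst k : bounded_lipschitz (fun=> k).
Proof.
split; first by exists `|k|.
by exists 0; split => // x y _ _; rewrite subrr normr0 mul0r.
Qed.

Lemma bounded_lipschitz_coord c : bounded_lipschitz (fun x => x c).
Proof.
split.
  by exists 1; split => // x /(_ c) /andP[x0 x1]; rewrite ger0_norm.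
exists 1; split => // x y _ _; rewrite mul1r /l1_dist (bigD1 c) //=.
by rewrite lerDl sumr_ge0.
Qed.

Lemma bounded_lipschitzN f : bounded_lipschitz f -> bounded_lipschitz (fun x => - f x).
Proof.
move=> [[M [M0 hM]] [L [L0 hL]]]; split.
  by exists M; split => // x cx; rewrite normrN hM.
by exists L; split => // x y cx cy; rewrite -opprD normrN hL.
Qed.

Lemma bounded_lipschitzD f g : bounded_lipschitz f -> bounded_lipschitz g ->
  bounded_lipschitz (fun x => f x + g x).
Proof.
move=> [[M1 [M10 hM1]] [L1 [L10 hL1]]] [[M2 [M20 hM2]] [L2 [L20 hL2]]]; split.
  exists (M1 + M2); split => [|x cx]; first exact: addr_ge0.
  by apply: le_trans (ler_normD _ _) _; rewrite lerD ?hM1 ?hM2.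
exists (L1 + L2); split => [|x y cx cy]; first exact: addr_ge0.
rewrite opprD addrACA mulrDl; apply: le_trans (ler_normD _ _) _.
by rewrite lerD ?hL1 ?hL2.
Qed.

Lemma bounded_lipschitzM f g : bounded_lipschitz f -> bounded_lipschitz g ->
  bounded_lipschitz (fun x => f x * g x).
Proof.
move=> [[M1 [M10 hM1]] [L1 [L10 hL1]]] [[M2 [M20 hM2]] [L2 [L20 hL2]]]; split.
  exists (M1 * M2); split => [|x cx]; first exact: mulr_ge0.
  by rewrite normrM ler_pM ?hM1 ?hM2.
exists (M1 * L2 + L1 * M2); split => [|x y cx cy].
  by rewrite addr_ge0 ?mulr_ge0.
have -> : f x * g x - f y * g y = f x * (g x - g y) + (f x - f y) * g y by ring.
have -> : (M1 * L2 + L1 * M2) * l1_dist x y =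
    M1 * (L2 * l1_dist x y) + (L1 * l1_dist x y) * M2 by ring.
apply: le_trans (ler_normD _ _) _.
by rewrite !normrM lerD ?ler_pM ?hM1 ?hM2 ?hL1 ?hL2.
Qed.

Lemma bounded_lipschitz_sum (T : Type) (s : seq T) (P : pred T) (F : T -> (I -> R) -> R) :
  (forall t, bounded_lipschitz (F t)) ->
  bounded_lipschitz (fun x => \sum_(t <- s | P t) F t x).
Proof.
move=> hF; elim: s => [|t s IH].
  by apply: (eq_bounded_lipschitz _ (bounded_lipschitz_cst 0)) => x; rewrite big_nil.
case Pt: (P t).
  by apply: (eq_bounded_lipschitz _ (bounded_lipschitzD (hF t) IH)) => x; rewrite big_cons Pt.
by apply: (eq_bounded_lipschitz _ IH) => x; rewrite big_cons Pt.
Qed.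

Lemma bounded_lipschitz_prod (T : Type) (s : seq T) (P : pred T) (F : T -> (I -> R) -> R) :
  (forall t, bounded_lipschitz (F t)) ->
  bounded_lipschitz (fun x => \prod_(t <- s | P t) F t x).
Proof.
move=> hF; elim: s => [|t s IH].
  by apply: (eq_bounded_lipschitz _ (bounded_lipschitz_cst 1)) => x; rewrite big_nil.
case Pt: (P t).
  by apply: (eq_bounded_lipschitz _ (bounded_lipschitzM (hF t) IH)) => x; rewrite big_cons Pt.
by apply: (eq_bounded_lipschitz _ IH) => x; rewrite big_cons Pt.
Qed.

Lemma bounded_lipschitz_det n (M : 'I_n -> 'I_n -> (I -> R) -> R) :
  (forall i j, bounded_lipschitz (M i j)) ->
  bounded_lipschitz (fun x => \det (\matrix_(i, j) M i j x)).
Proof.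
move=> hM; apply: (eq_bounded_lipschitz (f := fun x =>
  \sum_(s : 'S_n) (-1) ^+ s * \prod_i M i (s i) x)).
  move=> x; apply: eq_bigr => s _; congr (_ * _).
  by apply: eq_bigr => i _; rewrite mxE.
apply: bounded_lipschitz_sum => s; apply: bounded_lipschitzM.
  exact: bounded_lipschitz_cst.
by apply: bounded_lipschitz_prod => i; apply: hM.
Qed.

Lemma unit_cube_set_coord x c v : unit_cube x -> 0 <= v <= 1 -> unit_cube (set_coord x c v).
Proof. by move=> cx v01 c'; case: dfwithP. Qed.

Definition thin_near_zero (f : (I -> R) -> R) : Prop :=
  forall eps, 0 < eps -> exists2 del, 0 < del &
    box_coverable [set x | unit_cube x /\ `|f x| < del] eps.

Lemma thin_near_zero_cst k : k != 0 -> thin_near_zero (fun=> k).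
Proof.
move=> k0 eps /ltW/box_coverable0 cov0; exists `|k|; first by rewrite normr_gt0.
by apply: box_coverableS cov0 => x [_]; rewrite ltxx.
Qed.

Lemma jordan_null_zeros f : thin_near_zero f -> jordan_null [set x | unit_cube x /\ f x = 0].
Proof.
move=> tf eps /tf [del del0]; apply: box_coverableS => x [cx fx0].
by split; rewrite // fx0 normr0.
Qed.

Section AffineInCoord.
Variables (c : I) (f g : (I -> R) -> R).
Hypothesis g_set_coord : forall x v, g (set_coord x c v) = g x.
Hypothesis f_set_coord : forall x v, f (set_coord x c v) = f x + (v - x c) * g x.
Hypotheses (f_bl : bounded_lipschitz f) (g_bl : bounded_lipschitz g).

(* With [h x := f x - x c * g x], independent of [x c], the bound [|f x| < del] forces
   [x c] within [del / d] of [- h x / g x], a Lipschitz function of the other coordinates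
   where [|g| >= d]. *)
Lemma box_coverable_near_zero_steep : exists2 K, 0 <= K &
  forall d del e, 0 < d -> 0 <= del -> 0 < e ->
    box_coverable [set x | unit_cube x /\ `|f x| < del /\ d <= `|g x|] (K * del / d ^+ 2 + e).
Proof.
pose h x := f x - x c * g x.
have h_bl : bounded_lipschitz h.
  exact/(bounded_lipschitzD f_bl)/bounded_lipschitzN/bounded_lipschitzM/g_bl/bounded_lipschitz_coord.
move: g_bl h_bl => [[Mg [Mg0 hMg]] [Lg [Lg0 hLg]]] [[Mh [Mh0 hMh]] [Lh [Lh0 hLh]]].
exists (4 * Mg) => [|d del e d0 del0 e0]; first by rewrite mulr_ge0.
have d2 : 0 < d ^+ 2 by rewrite exprn_gt0.
have -> : 4 * Mg * del / d ^+ 2 + e = 2 * (2 * Mg * del / d ^+ 2) + e by ring.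
apply: (box_coverable_lipschitz_slab (c := c) (L := (Mg * Lh + Mh * Lg) / d ^+ 2)) => //.
- by rewrite divr_ge0 ?addr_ge0 ?mulr_ge0 // ltW.
- by rewrite !mulr_ge0 // invr_ge0 ltW.
- by move=> x [].
move=> x y [cx [fx gx]] [cy [fy gy]].
set y' := set_coord y c (x c).
have cy' : unit_cube y' by apply: unit_cube_set_coord.
have gy' : g y' = g y by apply: g_set_coord.
have hy' : h y' = h y by rewrite /h /y' f_set_coord g_set_coord dfwith_in; ring.
have cross : g x * g y * (x c - y c) =
    g y * f x - g x * f y - (g y' * (h x - h y') + h y' * (g y' - g x)).
  by rewrite gy' hy' /h; ring.
have bound : `|g x * g y * (x c - y c)| <=
    2 * Mg * del + (Mg * Lh + Mh * Lg) * l1_dist x y'.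
  rewrite cross; apply: le_trans (ler_normB _ _) _.
  have -> : 2 * Mg * del + (Mg * Lh + Mh * Lg) * l1_dist x y' =
      (Mg * del + Mg * del) + (Mg * (Lh * l1_dist x y') + Mh * (Lg * l1_dist x y')) by ring.
  apply: lerD; [apply: le_trans (ler_normB _ _) _|apply: le_trans (ler_normD _ _) _];
    rewrite !normrM; apply: lerD; apply: ler_pM => //.
  - exact: hMg.
  - exact: ltW.
  - exact: hMg.
  - exact: ltW.
  - exact: hMg.
  - exact: hLh.
  - exact: hMh.
  - by rewrite distrC hLg.
rewrite -(ler_pM2l d2); apply: le_trans (le_trans _ bound) _.
  by rewrite !normrM expr2 ler_wpM2r // (ler_pM (ltW d0) (ltW d0) gx gy).
rewrite le_eqVlt; apply/orP; left; apply/eqP; field; exact: lt0r_neq0.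
Qed.

Lemma thin_near_zero_affine_coord : thin_near_zero g -> thin_near_zero f.
Proof.
move=> g_thin eps e0; have e3 : 0 < eps / 3 by rewrite divr_gt0.
have [K K0 steep] := box_coverable_near_zero_steep.
have [d d0 flat] := g_thin _ e3.
have d2 : 0 < d ^+ 2 by rewrite exprn_gt0.
pose del := eps * d ^+ 2 / (3 * (K + 1)).
have del0 : 0 < del by rewrite !mulr_gt0 // invr_gt0 mulr_gt0 // ltr_wpDl.
exists del => //.
apply: (box_coverable_le (e := eps / 3 + (K * del / d ^+ 2 + eps / 3))).
  have -> : K * del / d ^+ 2 = eps / 3 * (K / (K + 1)).
    by rewrite /del; field; rewrite ?gt_eqF ?ltr_wpDl.
  have : K / (K + 1) <= 1 by rewrite ler_pdivrMr ?ltr_wpDl // mul1r lerDl.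
  by move: e3 => /ltW; nra.
apply: (box_coverableS (F := [set x | unit_cube x /\ `|g x| < d] `|`
                             [set x | unit_cube x /\ `|f x| < del /\ d <= `|g x|])).
  by move=> x [cx fx]; case: (ltP `|g x| d); [left|right].
exact: box_coverableU flat (steep _ _ _ d0 (ltW del0) e3).
Qed.

End AffineInCoord.

(** * Determinants of difference matrices *)

Definition diff_mx m (p q : 'I_m -> 'I_m -> I) x : 'M[R]_m :=
  \matrix_(a, b) (x (p a b) - x (q a b)).

Definition lift_idx m (p : 'I_m.+1 -> 'I_m.+1 -> I) (a b : 'I_m) : I :=
  p (lift ord0 a) (lift ord0 b).

Lemma bounded_lipschitz_det_diff_mx m (p q : 'I_m -> 'I_m -> I) :
  bounded_lipschitz (fun x => \det (diff_mx p q x)).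
Proof.
apply: bounded_lipschitz_det => a b.
exact/bounded_lipschitzD/bounded_lipschitzN/bounded_lipschitz_coord/bounded_lipschitz_coord.
Qed.

Lemma diff_mx_set_coord_out m (p q : 'I_m -> 'I_m -> I) x c v :
  (forall a b, p a b != c) -> (forall a b, q a b != c) ->
  diff_mx p q (set_coord x c v) = diff_mx p q x.
Proof.
move=> pc qc; apply/matrixP => a b.
by rewrite !mxE !dfwith_out // eq_sym ?pc ?qc.
Qed.

Lemma cofactor_diff_mx00 m (p q : 'I_m.+1 -> 'I_m.+1 -> I) x :
  cofactor (diff_mx p q x) 0 0 = \det (diff_mx (lift_idx p) (lift_idx q) x).
Proof.
rewrite /cofactor expr0 mul1r; congr (\det _).
by apply/matrixP => a b; rewrite !mxE.
Qed.

Lemma det_diff_mx_set_coord00 m (p q : 'I_m.+1 -> 'I_m.+1 -> I) x v :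
  (forall a b a' b', p a b = p a' b' -> (a, b) = (a', b')) ->
  (forall a b a' b', p a b != q a' b') ->
  \det (diff_mx p q (set_coord x (p 0 0) v)) =
    \det (diff_mx p q x) + (v - x (p 0 0)) * \det (diff_mx (lift_idx p) (lift_idx q) x).
Proof.
move=> p_inj pq_disj; rewrite -cofactor_diff_mx00 -det_add_scale_delta.
congr (\det _); apply/matrixP => a b; rewrite !mxE.
rewrite (dfwith_out _ _ (pq_disj _ _ _ _)).
have [[-> ->]|ab00] := eqVneq (a, b) (0, 0); first by rewrite dfwith_in eqxx mulr1; ring.
rewrite dfwith_out; last by apply: contra_neq ab00 => /p_inj.
by move: ab00; rewrite xpair_eqE => /negbTE->; rewrite mulr0 addr0.
Qed.

Lemma thin_near_zero_det_diff_mx m (p q : 'I_m -> 'I_m -> I) :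
  (forall a b a' b', p a b = p a' b' -> (a, b) = (a', b')) ->
  (forall a b a' b', p a b != q a' b') ->
  thin_near_zero (fun x => \det (diff_mx p q x)).
Proof.
elim: m p q => [|m IH] p q p_inj pq_disj.
  under [fun x => _]funext => x do rewrite det_mx00.
  exact/thin_near_zero_cst/oner_neq0.
have p00_out a b : p (lift 0 a) (lift 0 b) != p 0 0.
  by apply: contra_neq (neq_lift 0 a) => /p_inj [].
apply: (@thin_near_zero_affine_coord (p 0 0) _ (fun x => \det (diff_mx (lift_idx p) (lift_idx q) x))).
- by move=> x v; rewrite diff_mx_set_coord_out // => a b; rewrite eq_sym pq_disj.
- by move=> x v; apply: det_diff_mx_set_coord00.
- exact: bounded_lipschitz_det_diff_mx.
- exact: bounded_lipschitz_det_diff_mx.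
apply: IH => [a b a' b' /p_inj/eqP|a b a' b']; last exact: pq_disj.
by rewrite xpair_eqE !(inj_eq (@lift_inj _ 0)) => /andP[/eqP-> /eqP->].
Qed.

End UnitCube.

(** * A minor of T^i controlling its rank *)

Section ScantMinor.
Variables (R : realType) (A O : finType) (i : A) (S : {set rowT O i}).

Definition diff_row := ({j : A | j != i} + {j : A | j != i})%type.
Definition S_diff : {set diff_row} := [set r | inl r \in S].
Definition S_id : {set O} := [set w | inr w \in S].
Definition minor_size := minn #|S_diff| #|~: S_id|.

Definition minor_diff_row (a : 'I_minor_size) : diff_row :=
  enum_val (widen_ord (geq_minl _ _) a).
Definition minor_free_col (b : 'I_minor_size) : O :=
  enum_val (widen_ord (geq_minr _ _) b).

Definition minor_p (a b : 'I_minor_size) : envT A O :=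
  match minor_diff_row a with
  | inl j => inl (val j, minor_free_col b)
  | inr j => inr (val j, minor_free_col b)
  end.
Definition minor_q (a b : 'I_minor_size) : envT A O :=
  match minor_diff_row a with
  | inl _ => inl (i, minor_free_col b)
  | inr _ => inr (i, minor_free_col b)
  end.

Lemma minor_p_inj a b a' b' : minor_p a b = minor_p a' b' -> (a, b) = (a', b').
Proof.
have row_inj : injective minor_diff_row by move=> ? ? /enum_val_inj [/ord_inj].
have col_inj : injective minor_free_col by move=> ? ? /enum_val_inj [/ord_inj].
rewrite /minor_p; case ea: (minor_diff_row a) => [j|j]; case ea': (minor_diff_row a') => [j'|j'] //=;
  by move=> [/val_inj ej /col_inj ->]; congr pair; apply: row_inj; rewrite ea ea' ej.
Qed.

Lemma minor_pq_disj a b a' b' : minor_p a b != minor_q a' b'.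
Proof.
rewrite /minor_p /minor_q.
by case: (minor_diff_row a) => -[j ji]; case: (minor_diff_row a') => j' //;
  apply/eqP => -[eji _]; rewrite eji eqxx in ji.
Qed.

Definition minor_row (k : 'I_(minor_size + #|S_id|)) : rowT O i :=
  match split k with inl a => inl (minor_diff_row a) | inr b => inr (enum_val b) end.
Definition minor_col (k : 'I_(minor_size + #|S_id|)) : O :=
  match split k with inl a => minor_free_col a | inr b => enum_val b end.

Definition minor_mx (x : envT A O -> R) : 'M[R]_(minor_size + #|S_id|) :=
  \matrix_(k, l) Tmat x (minor_row k) (minor_col l).

Lemma minor_row_in k : minor_row k \in S.
Proof.
rewrite /minor_row; case: split => a; last by have := enum_valP a; rewrite inE.
by have := enum_valP (widen_ord (geq_minl #|S_diff| #|~: S_id|) a); rewrite inE.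
Qed.

Lemma minor_size_addn : (minor_size + #|S_id|)%N = minn #|S| #|O|.
Proof.
have -> : #|S| = (#|S_diff| + #|S_id|)%N.
  rewrite -!sum1_card (big_sumType _ (fun r => r \in S)) /=.
  by congr (_ + _)%N; apply: eq_bigl => r; rewrite inE.
by rewrite /minor_size addn_minl [(#|~: S_id| + _)%N]addnC cardsC.
Qed.

(* The identity rows of [S] meet only their own columns, all outside the free ones. *)
Lemma det_minor_mx (x : envT A O -> R) : \det (minor_mx x) = \det (diff_mx minor_p minor_q x).
Proof.
have split_l a : split (lshift #|S_id| a) = inl a := unsplitK (inl _).
have split_r b : split (rshift minor_size b) = inr b := unsplitK (inr _).
have ul : ulsubmx (minor_mx x) = diff_mx minor_p minor_q x.
  apply/matrixP => a b; rewrite !mxE /minor_row /minor_col !split_l /minor_p /minor_q.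
  by case: minor_diff_row.
have dl : dlsubmx (minor_mx x) = 0.
  apply/matrixP => b a; rewrite !mxE /minor_row /minor_col split_l split_r /=.
  case: eqP => // eba; have := enum_valP (widen_ord (geq_minr #|S_diff| #|~: S_id|) a).
  by rewrite -/(minor_free_col a) -eba inE; have := enum_valP b; rewrite inE => ->.
have dr : drsubmx (minor_mx x) = 1%:M.
  by apply/matrixP => b b'; rewrite !mxE /minor_row /minor_col !split_r /= (inj_eq enum_val_inj).
by rewrite -(submxK (minor_mx x)) dl dr det_ublock det1 mulr1 ul.
Qed.

Lemma mxrank_Tmat_le (x : envT A O -> R) k n (rs : 'I_k -> rowT O i) (cs : 'I_n -> O) :
  (forall a, rs a \in S) ->
  (\rank (\matrix_(a, b) Tmat x (rs a) (cs b)) <= \rank (Tsub x S))%N.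
Proof.
move=> rsS; have -> : \matrix_(a, b) Tmat x (rs a) (cs b) =
    mxsub (fun a => enum_rank_in (rsS a) (rs a)) (fun b => enum_rank (cs b)) (Tsub x S).
  by apply/matrixP => a b; rewrite !mxE enum_rankK_in ?rsS // enum_rankK.
exact: mxrank_mxsub.
Qed.

Lemma rank_Tsub_of_det (x : envT A O -> R) :
  \det (diff_mx minor_p minor_q x) != 0 -> \rank (Tsub x S) = minn #|S| #|O|.
Proof.
move=> det_neq0; apply/eqP; rewrite eqn_leq leq_min rank_leq_row rank_leq_col /=.
have : minor_mx x \in unitmx by rewrite unitmxE det_minor_mx unitfE.
rewrite -row_free_unit -minor_size_addn => /eqP <-.
exact: mxrank_Tmat_le minor_row_in.
Qed.

End ScantMinor.

Theorem lemma2 (R : realType) (A O : finType) (hA : (0 < #|A|)%N) (hO : (0 < #|O|)%N) :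
  lebesgue_null (@env_cube R A O `\` [set x | scant_indifferences x]).
Proof.
have [a0 _] := card_gt0P hA; have [w0 _] := card_gt0P hO.
apply: (jordan_null_lebesgue_null (inl (a0, w0))).
pose Z i (S : {set rowT O i}) := [set x : envT A O -> R |
  unit_cube x /\ \det (diff_mx (minor_p (S := S)) (minor_q (S := S)) x) = 0].
apply: (jordan_nullS (F := \bigcup_i \bigcup_S Z i S)).
  move=> x [cx not_scant]; apply: contrapT => not_Z; apply: not_scant => i S.
  apply: rank_Tsub_of_det; apply/eqP => det0; apply: not_Z.
  by exists i => //; exists S.
apply: jordan_null_bigcup => i; apply: jordan_null_bigcup => S.
exact/jordan_null_zeros/thin_near_zero_det_diff_mx/minor_pq_disj/minor_p_inj.
Qed.
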